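(* Let $(M^7,\varphi)$ be a manifold with a $\mathrm{G}_2$-structure and $\zeta=(1,0)$ the associated unit spinor. Then for every vector field $X$, $(X\lrcorner\varphi)\cdot\zeta=3X\cdot\zeta$; and for every $\gamma\in\Omega^3_{27}$, written as $\gamma_{ijk}=h_{ip}\varphi_{pjk}+h_{jp}\varphi_{ipk}+h_{kp}\varphi_{ijp}$ for a traceless symmetric 2-tensor $h$, one has $(X\lrcorner\gamma)\cdot\zeta=2h(X)\cdot\zeta$ and $(X\lrcorner\ast\gamma)\cdot\zeta=-2h(X)\cdot\zeta$.
   Context: The spinor bundle is identified with $\underline{\mathbb{R}}\oplus TM$, $\zeta=(1,0)$, with Clifford multiplication of a vector $Y$ on a spinor $(f,Z)$ given by $Y\cdot(f,Z)=(-\langle Y,Z\rangle,\,fY+Y\times Z)$, where $Y\times Z=(\varphi(Y,Z,\cdot))^\sharp$ (using the metric induced by $\varphi$). For a $k$-form $\epsilon$ and local orthonormal frame $e_i$, $\epsilon\cdot(f,Z)=\frac1{k!}\epsilon_{i_1\dots i_k}e_{i_1}\cdot(e_{i_2}\cdot(\cdots(e_{i_k}\cdot(f,Z))\cdots))$. $\Omega^3_{27}$ is the 27-dimensional irreducible $\mathrm{G}_2$-summand of 3-forms, whose elements are exactly those of the form above with $h$ traceless symmetric; indices are in an orthonormal frame, repeated indices summed; $\ast$ is the Hodge star of the induced metric and orientation. *)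

(* Pointwise (single tangent space) model of a G2-structure. *)
From HB Require Import structures.
From mathcomp Require Import all_boot all_order all_algebra.
Set Implicit Arguments. Unset Strict Implicit. Unset Printing Implicit Defensive.
Import Order.TTheory GRing.Theory Num.Theory.
Local Open Scope ring_scope.

Section G2.
Variable R : realFieldType.

(* Vectors of T_pM in an orthonormal frame e_1..e_7 (indices 0..6). *)
Definition vec := 'I_7 -> R.
(* Spinors: sections of R (+) TM, written (f, Z). *)
Definition spinor := (R * vec)%type.

Definition ebasis (i : 'I_7) : vec := fun j => (i == j)%:R.

Definition delta3 (i j k a b c : 'I_7) : R :=
  \det (\matrix_(r < 3, s < 3)
          ((tnth [tuple i; j; k] r == tnth [tuple a; b; c] s)%:R : R)).

Definition eps7 (a b c d e f g : 'I_7) : R :=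
  \det (\matrix_(r < 7, s < 7)
          ((tnth [tuple a; b; c; d; e; f; g] r == s)%:R : R)).

Definition o (n : nat) : 'I_7 := inord n.

(* Standard G2 3-form
   phi = e123 + e145 + e167 + e246 - e257 - e347 - e356
   (1-based indices), components phi_{ijk} in the orthonormal frame. *)
Definition phi (i j k : 'I_7) : R :=
    delta3 i j k (o 0) (o 1) (o 2) + delta3 i j k (o 0) (o 3) (o 4)
  + delta3 i j k (o 0) (o 5) (o 6) + delta3 i j k (o 1) (o 3) (o 5)
  - delta3 i j k (o 1) (o 4) (o 6) - delta3 i j k (o 2) (o 3) (o 6)
  - delta3 i j k (o 2) (o 4) (o 5).

Definition inner (Y Z : vec) : R := \sum_i Y i * Z i.

Definition cross (Y Z : vec) : vec :=
  fun l => \sum_i \sum_j phi i j l * Y i * Z j.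

Definition cliff (Y : vec) (s : spinor) : spinor :=
  (- inner Y s.2, fun l => s.1 * Y l + cross Y s.2 l).

Definition sp_add (s t : spinor) : spinor := (s.1 + t.1, fun l => s.2 l + t.2 l).
Definition sp_scale (c : R) (s : spinor) : spinor := (c * s.1, fun l => c * s.2 l).
Definition sp_zero : spinor := (0, fun _ => 0).
Definition sp_sum (I : finType) (F : I -> spinor) : spinor :=
  \big[sp_add/sp_zero]_(i : I) F i.

Definition cliff2 (eps : 'I_7 -> 'I_7 -> R) (s : spinor) : spinor :=
  sp_sum (fun i : 'I_7 => sp_sum (fun j : 'I_7 =>
    sp_scale (eps i j / 2%:R) (cliff (ebasis i) (cliff (ebasis j) s)))).

Definition cliff3 (eps : 'I_7 -> 'I_7 -> 'I_7 -> R) (s : spinor) : spinor :=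
  sp_sum (fun i : 'I_7 => sp_sum (fun j : 'I_7 => sp_sum (fun k : 'I_7 =>
    sp_scale (eps i j k / 6%:R)
      (cliff (ebasis i) (cliff (ebasis j) (cliff (ebasis k) s)))))).

Definition zeta : spinor := (1, fun _ => 0).

(* Hodge star of a 3-form (orientation e_1 ^ ... ^ e_7, induced by phi) *)
Definition hodge3 (g : 'I_7 -> 'I_7 -> 'I_7 -> R) (i j k l : 'I_7) : R :=
  (\sum_a \sum_b \sum_c g a b c * eps7 a b c i j k l) / 6%:R.

Definition contr3 (X : vec) (g : 'I_7 -> 'I_7 -> 'I_7 -> R) : 'I_7 -> 'I_7 -> R :=
  fun j k => \sum_i X i * g i j k.
Definition contr4 (X : vec) (g : 'I_7 -> 'I_7 -> 'I_7 -> 'I_7 -> R)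
  : 'I_7 -> 'I_7 -> 'I_7 -> R :=
  fun j k l => \sum_i X i * g i j k l.

Definition gamma_of (h : 'I_7 -> 'I_7 -> R) (i j k : 'I_7) : R :=
  \sum_p (h i p * phi p j k + h j p * phi i p k + h k p * phi i j p).

Definition happ (h : 'I_7 -> 'I_7 -> R) (X : vec) : vec :=
  fun i => \sum_j h i j * X j.

Definition symmetric2 (h : 'I_7 -> 'I_7 -> R) := forall i j, h i j = h j i.
Definition traceless2 (h : 'I_7 -> 'I_7 -> R) := \sum_i h i i = 0.

End G2.

From HB Require Import structures.
From mathcomp Require Import all_boot all_order all_algebra.
From mathcomp Require Import ring ssrZ.
From Stdlib Require Import BinInt FunctionalExtensionality.
Import GRing.Theory Num.Theory.

(* Clifford multiplication gives e_i e_j zeta and e_i e_j e_k zeta explicitly in terms of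
   phi, so each component of each identity is a finite contraction of X, h, phi and the
   Levi-Civita symbol.  Since gamma_of h = sum_mq h_mq gamma_of E_mq for the matrix units
   E_mq, such a contraction is sum_mq h_mq T_mq for an integer tensor T, and for h
   symmetric and traceless it only depends on T modulo tensors whose symmetric part is a
   multiple of the identity.  What remains are finitely many identities between integer
   tensors, decided by evaluation. *)

Set Implicit Arguments.
Unset Strict Implicit.
Unset Printing Implicit Defensive.

Section IntegerTensors.
Local Open Scope Z_scope.

Definition kd (i j : nat) : Z := if i == j then 1 else 0.

Definition sum7 (F : nat -> Z) : Z := foldr (fun i s => F i + s) 0 (iota 0 7).

Lemma sum7_ext (F G : nat -> Z) : F =1 G -> sum7 F = sum7 G.
Proof. by move=> /functional_extensionality ->. Qed.

Lemma sum7_eq0 (F : nat -> Z) : F =1 (fun=> 0) -> sum7 F = 0.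
Proof. by move=> /sum7_ext ->. Qed.

(* Tabulates f on 0..6; reduction shares the table, so each entry of the tensors below
   is evaluated only once. *)
Definition memo7 {A : Type} (f : nat -> A) : nat -> A :=
  let t := map f (iota 0 7) in fun i => if t is x :: _ then nth x t i else f i.

Lemma memo7E (A : Type) (f : nat -> A) (i : 'I_7) : memo7 f i = f i.
Proof.
rewrite /memo7; cbv zeta beta; case E: (map f (iota 0 7)) => [//|x t].
by rewrite -E (nth_map O) ?size_iota // nth_iota.
Qed.

(* The signature of s as a permutation of its values (0 if a value repeats), computed as
   the Laplace expansion along the first row (det_graph_mx). *)
Fixpoint sign_rec (n : nat) (s : seq nat) : Z :=
  match n, s with
  | n'.+1, x :: s' =>
      if x \in s' then 0 else (if odd x then -1 else 1) * sign_rec n' (map (unbump x) s')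
  | _, _ => 1
  end.

Definition sign_seq (s : seq nat) : Z := sign_rec (size s) s.

Lemma sign_seq_nonuniq (s : seq nat) : ~~ uniq s -> sign_seq s = 0.
Proof.
rewrite /sign_seq; elim: (size s) {-2}s (erefl (size s)) => [|n IH] [|x t] //= [St].
case: ifP => //= xNt Nu.
have unbump_inj : {in t &, injective (unbump x)}.
  move=> y z yt zt /(congr1 (bump x)); rewrite !unbumpKcond.
  by case: eqP yt => [->|_ _]; [rewrite xNt | case: eqP zt => [->|]; rewrite ?xNt].
by rewrite -(size_map (unbump x)) IH ?Z.mul_0_r ?size_map ?map_inj_in_uniq.
Qed.

Lemma sign_seq_cat_nonuniq (s t : seq nat) : ~~ uniq s -> sign_seq (s ++ t) = 0.
Proof. by move=> Ns; apply: sign_seq_nonuniq; rewrite cat_uniq negb_and Ns. Qed.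

Lemma sign_seq_cat_dup (s t : seq nat) x : x \in s -> sign_seq (s ++ x :: t) = 0.
Proof. by move=> xs; apply: sign_seq_nonuniq; rewrite cat_uniq /= xs andbF. Qed.

(* Skips the index triples that repeat a value, whose terms vanish (eps_contract3E). *)
Definition eps_contract3 (s : seq nat) (F : nat -> nat -> nat -> Z) : Z :=
  if ~~ uniq s then 0 else
  sum7 (fun i => if i \in s then 0 else
  sum7 (fun j => if j \in rcons s i then 0 else
  sum7 (fun k => if k \in rcons (rcons s i) j then 0 else
    sign_seq (s ++ [:: i; j; k]) * F i j k))).

Lemma eps_contract3E (s : seq nat) (F : nat -> nat -> nat -> Z) :
  eps_contract3 s F =
  sum7 (fun i => sum7 (fun j => sum7 (fun k => sign_seq (s ++ [:: i; j; k]) * F i j k))).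
Proof.
rewrite /eps_contract3; case: ifPn => [Ns | _].
  symmetry; apply: sum7_eq0 => i; apply: sum7_eq0 => j; apply: sum7_eq0 => k.
  by rewrite sign_seq_cat_nonuniq.
apply: sum7_ext => i; case: ifPn => [iS | _].
  by symmetry; apply: sum7_eq0 => j; apply: sum7_eq0 => k /=; rewrite sign_seq_cat_dup.
apply: sum7_ext => j; case: ifPn => [jS | _].
  by symmetry; apply: sum7_eq0 => k /=; rewrite -cat_rcons sign_seq_cat_dup.
by apply: sum7_ext => k /=; case: ifPn => // kS; rewrite -2!cat_rcons sign_seq_cat_dup.
Qed.

Definition delta3Z (i j k a b c : nat) : Z :=
  kd i a * (kd j b * kd k c - kd j c * kd k b)
  - kd i b * (kd j a * kd k c - kd j c * kd k a)
  + kd i c * (kd j a * kd k b - kd j b * kd k a).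

Definition phiZ : nat -> nat -> nat -> Z :=
  memo7 (fun i => memo7 (fun j => memo7 (fun k =>
    delta3Z i j k 0 1 2 + delta3Z i j k 0 3 4 + delta3Z i j k 0 5 6
  + delta3Z i j k 1 3 5 - delta3Z i j k 1 4 6 - delta3Z i j k 2 3 6
  - delta3Z i j k 2 4 5))).

Definition cliffZ : nat -> nat -> nat -> nat -> Z :=
  memo7 (fun i => memo7 (fun j => memo7 (fun k => memo7 (fun l =>
    - (kd j k * kd i l) + sum7 (fun b => phiZ i b l * phiZ j k b))))).

Definition gamma_unitZ (m q a b c : nat) : Z :=
  kd a m * phiZ q b c + kd b m * phiZ a q c + kd c m * phiZ a b q.

Definition hodge_phiZ : nat -> nat -> nat -> nat -> Z :=
  memo7 (fun a => memo7 (fun b => memo7 (fun c => memo7 (fun p =>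
    eps_contract3 [:: a; b; c; p] (fun i j k => phiZ j k i))))).

Definition hodge_cliffZ : nat -> nat -> nat -> nat -> nat -> Z :=
  memo7 (fun a => memo7 (fun b => memo7 (fun c => memo7 (fun p => memo7 (fun l =>
    eps_contract3 [:: a; b; c; p] (fun i j k => cliffZ i j k l)))))).

Definition pure_trace (T : nat -> nat -> Z) : bool :=
  let t := memo7 (fun m => memo7 (fun q => T m q)) in
  let c := T O O in
  all (fun m => all (fun q => t m q + t q m == kd m q * (c + c)) (iota 0 7)) (iota 0 7).

End IntegerTensors.

Lemma iota7 (i : 'I_7) : (i : nat) \in iota 0 7.
Proof. by rewrite mem_iota add0n ltn_ord. Qed.

Lemma pure_traceP (T : nat -> nat -> Z) (m q : 'I_7) :
  pure_trace T -> (T m q + T q m = kd m q * (T O O + T O O))%Z.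
Proof.
rewrite /pure_trace; cbv zeta => /allP /(_ _ (iota7 m)) /allP /(_ _ (iota7 q)) /eqP.
by rewrite !memo7E.
Qed.

(* inZp rather than ord_enum, whose insub does not reduce under evaluation. *)
Definition all7 (P : pred 'I_7) : bool := all P [seq inZp i | i <- iota 0 7].

Lemma all7P (P : pred 'I_7) : all7 P -> forall i, P i.
Proof.
move=> /allP P7 i; apply: P7; apply/mapP; exists (val i); first exact: iota7.
by apply: val_inj; rewrite /= modn_small.
Qed.

Lemma all7P2 (P : 'I_7 -> 'I_7 -> bool) : all7 (fun i => all7 (P i)) -> forall i j, P i j.
Proof. by move=> P7 i; apply: all7P; apply: all7P P7 i. Qed.

Lemma all7P3 (P : 'I_7 -> 'I_7 -> 'I_7 -> bool) :
  all7 (fun i => all7 (fun j => all7 (P i j))) -> forall i j k, P i j k.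
Proof. by move=> P7 i; apply: all7P2; apply: all7P P7 i. Qed.

Local Open Scope ring_scope.

Definition Zr {R : pzRingType} : Z -> R := intr \o int_of_Z.

Section IntegerCast.
Variable R : pzRingType.

Lemma ZrD (x y : Z) : Zr (x + y)%Z = Zr x + Zr y :> R. Proof. exact: rmorphD. Qed.
Lemma ZrM (x y : Z) : Zr (x * y)%Z = Zr x * Zr y :> R. Proof. exact: rmorphM. Qed.
Lemma ZrN (x : Z) : Zr (- x)%Z = - Zr x :> R. Proof. exact: rmorphN. Qed.
Lemma ZrB (x y : Z) : Zr (x - y)%Z = Zr x - Zr y :> R. Proof. exact: rmorphB. Qed.
Lemma Zr0 : Zr 0%Z = 0 :> R. Proof. exact: rmorph0. Qed.
Lemma Zr1 : Zr 1%Z = 1 :> R. Proof. exact: rmorph1. Qed.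
Lemma ZrN1 : Zr (-1)%Z = -1 :> R. Proof. exact: rmorphN1. Qed.

Lemma Zr_kd n (i j : 'I_n) : Zr (kd i j) = (i == j)%:R :> R.
Proof. by rewrite /kd -val_eqE; case: eqP; rewrite ?Zr1 ?Zr0. Qed.

Lemma Zr_sign (x : nat) : Zr (if odd x then (-1)%Z else 1%Z) = (-1) ^+ x :> R.
Proof. by rewrite -signr_odd; case: (odd x); rewrite ?ZrN1 ?Zr1. Qed.

Lemma Zr_sum7 (F : nat -> Z) : Zr (sum7 F) = \sum_(i < 7) (Zr (F i) : R).
Proof.
rewrite /sum7 -[iota 0 7]/(index_iota 0 7) -(big_mkord xpredT (fun i => Zr (F i) : R)).
by elim: (index_iota 0 7) => [|i r IH]; rewrite ?big_nil ?Zr0 // big_cons /= ZrD IH.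
Qed.

Lemma Zr_sum7_2 (F : nat -> nat -> Z) :
  Zr (sum7 (fun i => sum7 (F i))) = \sum_(i < 7) \sum_(j < 7) (Zr (F i j) : R).
Proof. by rewrite Zr_sum7; apply: eq_bigr => i _; rewrite Zr_sum7. Qed.

Lemma Zr_sum7_3 (F : nat -> nat -> nat -> Z) :
  Zr (sum7 (fun i => sum7 (fun j => sum7 (F i j)))) =
  \sum_(i < 7) \sum_(j < 7) \sum_(k < 7) (Zr (F i j k) : R).
Proof. by rewrite Zr_sum7; apply: eq_bigr => i _; rewrite Zr_sum7_2. Qed.

End IntegerCast.

Lemma det_graph_mx (R : comNzRingType) n (t : 'I_n -> 'I_n) :
  \det (\matrix_(r, s) ((t r == s)%:R : R)) = Zr (sign_seq [seq val (t r) | r <- enum 'I_n]).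
Proof.
elim: n t => [|n IH] t; first by rewrite det_mx00 enum_ord0 /= Zr1.
rewrite (expand_det_row _ ord0) (bigD1 (t ord0)) //= big1 ?addr0; last first.
  by move=> j /negbTE tj; rewrite mxE eq_sym tj mul0r.
rewrite mxE eqxx mul1r /cofactor add0n /sign_seq enum_ordSl /= -map_comp.
case: ifP => [/mapP [r _ /= /val_inj tr] | /negbT t0N].
  rewrite Zr0 (expand_det_row _ r) big1 ?mulr0 // => j _.
  by rewrite !mxE -tr (negbTE (neq_lift _ _)) mul0r.
pose t' r := odflt r (unlift (t ord0) (t (lift ord0 r))).
have t_lift r : t (lift ord0 r) = lift (t ord0) (t' r).
  rewrite /t'; case: unliftP => //= t0E.
  by case/negP: t0N; apply/mapP; exists r; rewrite ?mem_enum //= t0E.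
have -> : row' ord0 (col' (t ord0) (\matrix_(r, s) ((t r == s)%:R : R)))
          = \matrix_(r, s) ((t' r == s)%:R : R).
  by apply/matrixP => r s; rewrite !mxE t_lift (inj_eq (@lift_inj _ _)).
rewrite IH ZrM Zr_sign /sign_seq !size_map -map_comp; congr (_ * Zr (sign_rec _ _)).
by apply: eq_map => r /=; rewrite t_lift /= bumpK.
Qed.

Section Sums.
Variable R : pzRingType.

Lemma sum_delta (I : finType) (i : I) (F : I -> R) : \sum_a (i == a)%:R * F a = F i.
Proof.
rewrite (bigD1 i) //= eqxx mul1r big1 ?addr0 // => a.
by rewrite eq_sym => /negbTE ->; rewrite mul0r.
Qed.

Lemma sum_deltar (I : finType) (i : I) (F : I -> R) : \sum_a F a * (a == i)%:R = F i.
Proof.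
by rewrite -(sum_delta i F); apply: eq_bigr => a _; rewrite eq_sym; apply: commr_nat.
Qed.

Lemma sum_pairing (I J : finType) (a : J -> R) (A : J -> I -> R) (C : I -> R) :
  \sum_x (\sum_p a p * A p x) * C x = \sum_p a p * \sum_x A p x * C x.
Proof.
under eq_bigr do rewrite mulr_suml; rewrite exchange_big; apply: eq_bigr => p _.
by rewrite mulr_sumr; apply: eq_bigr => x _; rewrite mulrA.
Qed.

Lemma sum3_pair (I J K : finType) (F : I -> J -> K -> R) :
  \sum_i \sum_j \sum_k F i j k = \sum_(x : I * (J * K)) F x.1 x.2.1 x.2.2.
Proof. by under eq_bigr do rewrite pair_big; rewrite pair_big. Qed.

End Sums.

Lemma sym_traceless_pairing (R : numDomainType) n (h T : 'I_n -> 'I_n -> R) c :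
  (forall i j, h i j = h j i) -> \sum_i h i i = 0 ->
  (forall i j, T i j + T j i = (i == j)%:R * c) ->
  \sum_i \sum_j h i j * T i j = 0.
Proof.
move=> hC h0 Tsym; set S := LHS; have : S *+ 2 = 0.
  rewrite mulr2n {2}/S exchange_big /= -big_split /=.
  under eq_bigr => i _ do rewrite -big_split /=.
  under eq_bigr => i _ do under eq_bigr => j _ do rewrite [h j i]hC -mulrDr Tsym mulrCA.
  by under eq_bigr => i _ do rewrite sum_delta; rewrite -mulr_suml h0 mul0r.
by move/eqP; rewrite mulrn_eq0 => /eqP.
Qed.

Section G2Identities.
Variable R : realFieldType.

Lemma delta3_int (i j k a b c : 'I_7) : delta3 R i j k a b c = Zr (delta3Z i j k a b c).
Proof.
rewrite /delta3 (expand_det_row _ 0) !big_ord_recl big_ord0 /cofactor.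
rewrite !(expand_det_row _ 0) !big_ord_recl !big_ord0 /cofactor !det_mx11 !mxE /=.
by rewrite !(tnth_nth i) /= /delta3Z !(ZrD, ZrM, ZrB, Zr_kd); ring.
Qed.

Lemma phi_int (i j k : 'I_7) : phi R i j k = Zr (phiZ i j k).
Proof. by rewrite /phi !delta3_int /phiZ !memo7E /o !inordK // !(ZrD, ZrB). Qed.

Lemma eps_contract3_int (a b c p : 'I_7) (F : nat -> nat -> nat -> Z) :
  \sum_i \sum_j \sum_k eps7 R a b c p i j k * Zr (F i j k) =
  Zr (eps_contract3 [:: a : nat; b : nat; c : nat; p : nat] F).
Proof.
rewrite eps_contract3E Zr_sum7; apply: eq_bigr => i _; rewrite Zr_sum7; apply: eq_bigr => j _.
rewrite Zr_sum7; apply: eq_bigr => k _.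
by rewrite ZrM /eps7 det_graph_mx (map_comp val (tnth _)) map_tnth_enum.
Qed.

Lemma phi_diag (i j : 'I_7) : phi R i j j = 0.
Proof.
rewrite phi_int; suff /eqP -> : phiZ i j j == 0%Z by rewrite Zr0.
by move: i j; apply: all7P2; vm_compute.
Qed.

Lemma phi_skew (i j k : 'I_7) : phi R i k j = - phi R i j k.
Proof.
rewrite !phi_int -ZrN; suff /eqP -> : phiZ i k j == (- phiZ i j k)%Z by [].
by move: i j k; apply: all7P3; vm_compute.
Qed.

Lemma phi_contract (p l : 'I_7) : \sum_i \sum_j phi R p i j * phi R i j l = 6%:R * (p == l)%:R.
Proof.
have -> : 6%:R * (p == l)%:R = Zr (6 * kd p l)%Z :> R by rewrite ZrM Zr_kd -(rmorph_nat Zr 6).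
suff /eqP <- : sum7 (fun i => sum7 (fun j => phiZ p i j * phiZ i j l)) == (6 * kd p l)%Z.
  rewrite Zr_sum7; apply: eq_bigr => i _; rewrite Zr_sum7; apply: eq_bigr => j _.
  by rewrite ZrM !phi_int.
by move: p l; apply: all7P2; vm_compute.
Qed.

Lemma hodge_phi_int (a b c p : 'I_7) :
  \sum_i \sum_j \sum_k eps7 R a b c p i j k * phi R j k i = Zr (hodge_phiZ a b c p).
Proof.
rewrite /hodge_phiZ !memo7E -eps_contract3_int.
by apply: eq_bigr => i _; apply: eq_bigr => j _; apply: eq_bigr => k _; rewrite phi_int.
Qed.

Definition cliff3_coeff (i j k l : 'I_7) : R :=
  - ((j == k)%:R * (i == l)%:R) + \sum_b phi R i b l * phi R j k b.

Lemma hodge_cliff_int (a b c p l : 'I_7) :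
  \sum_i \sum_j \sum_k eps7 R a b c p i j k * cliff3_coeff i j k l = Zr (hodge_cliffZ a b c p l).
Proof.
rewrite /hodge_cliffZ !memo7E -eps_contract3_int.
apply: eq_bigr => i _; apply: eq_bigr => j _; apply: eq_bigr => k _; congr (_ * _).
rewrite /cliffZ !memo7E ZrD ZrN ZrM !Zr_kd Zr_sum7; congr (_ + _).
by apply: eq_bigr => x _; rewrite ZrM !phi_int.
Qed.

End G2Identities.

Section GammaContractions.
Variable R : realFieldType.
Variable h : 'I_7 -> 'I_7 -> R.

Lemma gamma_of_int (a b c : 'I_7) :
  gamma_of h a b c = \sum_m \sum_q h m q * Zr (gamma_unitZ m q a b c).
Proof.
rewrite /gamma_of exchange_big /=; apply: eq_bigr => q _.
under eq_bigr => m _ do rewrite /gamma_unitZ !ZrD !ZrM !Zr_kd !mulrDr !(mulrCA (h m q)) -!phi_int.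
by rewrite !big_split /= !sum_delta.
Qed.

Lemma gamma_diag (p i : 'I_7) : gamma_of h p i i = 0.
Proof.
rewrite /gamma_of big1 // => q _.
by rewrite phi_diag (@phi_skew R p q i) mulr0 add0r mulrN addrN.
Qed.

Lemma gamma_pairing2 (p : 'I_7) (C : nat -> nat -> Z) :
  \sum_i \sum_j gamma_of h p i j * Zr (C i j) =
  \sum_m \sum_q h m q * Zr (sum7 (fun i => sum7 (fun j => gamma_unitZ m q p i j * C i j))).
Proof.
under eq_bigr => i _ do under eq_bigr => j _ do rewrite gamma_of_int pair_big /=.
rewrite pair_big /= sum_pairing pair_big /=; apply: eq_bigr => u _; congr (_ * _).
by rewrite Zr_sum7_2 pair_big; apply: eq_bigr => x _; rewrite ZrM.
Qed.

Lemma gamma_pairing3 (C : nat -> nat -> nat -> Z) :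
  \sum_a \sum_b \sum_c gamma_of h a b c * Zr (C a b c) =
  \sum_m \sum_q h m q *
    Zr (sum7 (fun a => sum7 (fun b => sum7 (fun c => gamma_unitZ m q a b c * C a b c)))).
Proof.
under eq_bigr => a _ do under eq_bigr => b _ do under eq_bigr => c _ do
  rewrite gamma_of_int pair_big /=.
rewrite sum3_pair sum_pairing pair_big /=; apply: eq_bigr => u _; congr (_ * _).
by rewrite Zr_sum7_3 sum3_pair; apply: eq_bigr => x _; rewrite ZrM.
Qed.

Hypotheses (h_sym : symmetric2 h) (h_tr : traceless2 h).

Lemma pure_trace_pairing (T : nat -> nat -> Z) :
  pure_trace T -> \sum_m \sum_q h m q * Zr (T m q) = 0.
Proof.
move=> PT; apply: (sym_traceless_pairing (c := Zr (T O O + T O O))) => // m q.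
by rewrite -ZrD pure_traceP // ZrM Zr_kd.
Qed.

Lemma pure_trace_pairing_coeff (T : nat -> nat -> Z) (kappa : Z) (p l : 'I_7) :
  pure_trace (fun m q => T m q - kappa * (kd m l * kd q p))%Z ->
  \sum_m \sum_q h m q * Zr (T m q) = Zr kappa * h l p.
Proof.
move=> /pure_trace_pairing /= PT.
have split m q : h m q * Zr (T m q) = h m q * Zr (T m q - kappa * (kd m l * kd q p))%Z
                                      + (p == q)%:R * ((l == m)%:R * (Zr kappa * h m q)).
  by rewrite ZrB !ZrM !Zr_kd [m == l]eq_sym [q == p]eq_sym; ring.
under eq_bigr => m _ do under eq_bigr => q _ do rewrite split.
under eq_bigr => m _ do rewrite big_split /= sum_delta.
by rewrite big_split /= PT add0r sum_delta.
Qed.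

Lemma gamma_pairing2_coeff (p l : 'I_7) (C : nat -> nat -> Z) (kappa : Z) :
  pure_trace (fun m q =>
    sum7 (fun i => sum7 (fun j => gamma_unitZ m q p i j * C i j)) - kappa * (kd m l * kd q p))%Z ->
  \sum_i \sum_j gamma_of h p i j * Zr (C i j) = Zr kappa * h l p.
Proof. by move=> PT; rewrite gamma_pairing2 (pure_trace_pairing_coeff PT). Qed.

Lemma gamma_pairing3_coeff (p l : 'I_7) (C : nat -> nat -> nat -> Z) (kappa : Z) :
  pure_trace (fun m q =>
    sum7 (fun a => sum7 (fun b => sum7 (fun c => gamma_unitZ m q a b c * C a b c)))
    - kappa * (kd m l * kd q p))%Z ->
  \sum_a \sum_b \sum_c gamma_of h a b c * Zr (C a b c) = Zr kappa * h l p.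
Proof. by move=> PT; rewrite gamma_pairing3 (pure_trace_pairing_coeff PT). Qed.

Lemma gamma_pairing3_eq0 (C : nat -> nat -> nat -> Z) :
  pure_trace (fun m q =>
    sum7 (fun a => sum7 (fun b => sum7 (fun c => gamma_unitZ m q a b c * C a b c)))) ->
  \sum_a \sum_b \sum_c gamma_of h a b c * Zr (C a b c) = 0.
Proof. by move=> PT; rewrite gamma_pairing3 (pure_trace_pairing PT). Qed.

Lemma gamma_phi_contract (p l : 'I_7) :
  \sum_i \sum_j gamma_of h p i j * phi R i j l = 4%:R * h l p.
Proof.
under eq_bigr => i _ do under eq_bigr => j _ do rewrite phi_int.
rewrite (@gamma_pairing2_coeff p l (fun i j => phiZ i j l) 4%Z).
  by rewrite -(rmorph_nat Zr 4).
by move: p l; apply: all7P2; vm_compute.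
Qed.

Lemma hodge_gamma_phi (p : 'I_7) :
  \sum_a \sum_b \sum_c gamma_of h a b c *
    (\sum_i \sum_j \sum_k eps7 R a b c p i j k * phi R j k i) = 0.
Proof.
under eq_bigr => a _ do under eq_bigr => b _ do under eq_bigr => c _ do rewrite hodge_phi_int.
rewrite (@gamma_pairing3_eq0 (fun a b c => hodge_phiZ a b c p)) //.
by move: p; apply: all7P; vm_compute.
Qed.

Lemma hodge_gamma_cliff (p l : 'I_7) :
  \sum_a \sum_b \sum_c gamma_of h a b c *
    (\sum_i \sum_j \sum_k eps7 R a b c p i j k * cliff3_coeff R i j k l) = - 72%:R * h l p.
Proof.
under eq_bigr => a _ do under eq_bigr => b _ do under eq_bigr => c _ do rewrite hodge_cliff_int.
rewrite (@gamma_pairing3_coeff p l (fun a b c => hodge_cliffZ a b c p l) (-72)%Z).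
  by rewrite -(rmorph_nat Zr 72) -rmorphN.
by move: p l; apply: all7P2; vm_compute.
Qed.

End GammaContractions.

Section CliffordZeta.
Variable R : realFieldType.
Local Notation e := (ebasis R).

Lemma spinor_ext (s t : spinor R) : s.1 = t.1 -> s.2 =1 t.2 -> s = t.
Proof. by case: s t => [a u] [b v] /= -> /functional_extensionality ->. Qed.

Lemma sp_sum_fst (I : finType) (F : I -> spinor R) : (sp_sum F).1 = \sum_i (F i).1.
Proof. exact: (big_morph fst (id1 := 0) (op1 := +%R)). Qed.

Lemma sp_sum_snd (I : finType) (F : I -> spinor R) l : (sp_sum F).2 l = \sum_i (F i).2 l.
Proof. exact: (big_morph (fun s : spinor R => s.2 l) (id1 := 0) (op1 := +%R)). Qed.

Lemma cliff_zeta (Y : vec R) : cliff Y (zeta R) = (0, Y).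
Proof.
apply: spinor_ext => [|l] /=; first by rewrite /inner big1 ?oppr0 // => i _; rewrite mulr0.
by rewrite mul1r /cross big1 ?addr0 // => i _; rewrite big1 // => j _; rewrite mulr0.
Qed.

Lemma cliff_ebasis (i : 'I_7) (s : spinor R) :
  cliff (e i) s = (- s.2 i, fun l => s.1 * (i == l)%:R + \sum_b phi R i b l * s.2 b).
Proof.
rewrite /cliff /inner /cross /ebasis; apply: spinor_ext => [|l] /=; first by rewrite sum_delta.
congr (_ + _); rewrite exchange_big; apply: eq_bigr => b _ /=.
rewrite -(sum_delta i (fun a => phi R a b l * s.2 b)).
by apply: eq_bigr => a _; rewrite mulrAC [LHS]mulrC.
Qed.

Lemma cliff_ebasis2_zeta (i j : 'I_7) :
  cliff (e i) (cliff (e j) (zeta R)) = (- (i == j)%:R, phi R i j).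
Proof.
rewrite cliff_zeta cliff_ebasis /= eq_sym; congr (_, _); apply: functional_extensionality => l.
by rewrite mul0r add0r /ebasis (eq_bigr _ (fun b _ => mulrC _ _)) sum_delta.
Qed.

Lemma cliff_ebasis3_zeta (i j k : 'I_7) :
  cliff (e i) (cliff (e j) (cliff (e k) (zeta R))) = (- phi R j k i, cliff3_coeff R i j k).
Proof.
rewrite cliff_ebasis2_zeta cliff_ebasis /=; congr (_, _); apply: functional_extensionality => l.
by rewrite /cliff3_coeff mulNr eq_sym.
Qed.

Lemma cliff2_zeta (eps : 'I_7 -> 'I_7 -> R) :
  cliff2 eps (zeta R) =
  (- (\sum_i eps i i) / 2%:R, fun l => (\sum_i \sum_j eps i j * phi R i j l) / 2%:R).
Proof.
apply: spinor_ext => [|l]; rewrite /cliff2.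
  rewrite sp_sum_fst [RHS]/= mulNr mulr_suml -sumrN; apply: eq_bigr => i _.
  rewrite sp_sum_fst (bigD1 i) // big1 ?addr0 => [|j /negbTE ij]; rewrite cliff_ebasis2_zeta /=.
    by rewrite eqxx addr0 mulrN mulr1n mulr1.
  by rewrite eq_sym ij mulr0n oppr0 mulr0.
rewrite sp_sum_snd [RHS]/= mulr_suml; apply: eq_bigr => i _; rewrite sp_sum_snd mulr_suml.
by apply: eq_bigr => j _; rewrite cliff_ebasis2_zeta mulrAC.
Qed.

Lemma cliff3_zeta (eps : 'I_7 -> 'I_7 -> 'I_7 -> R) :
  cliff3 eps (zeta R) =
  (- (\sum_i \sum_j \sum_k eps i j k * phi R j k i) / 6%:R,
   fun l => (\sum_i \sum_j \sum_k eps i j k * cliff3_coeff R i j k l) / 6%:R).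
Proof.
apply: spinor_ext => [|l]; rewrite /cliff3.
  rewrite sp_sum_fst [RHS]/= mulNr mulr_suml -sumrN; apply: eq_bigr => i _.
  rewrite sp_sum_fst mulr_suml -sumrN; apply: eq_bigr => j _.
  rewrite sp_sum_fst mulr_suml -sumrN; apply: eq_bigr => k _.
  by rewrite cliff_ebasis3_zeta /= mulrN mulrAC.
rewrite sp_sum_snd [RHS]/= mulr_suml; apply: eq_bigr => i _; rewrite sp_sum_snd mulr_suml.
apply: eq_bigr => j _; rewrite sp_sum_snd mulr_suml.
by apply: eq_bigr => k _; rewrite cliff_ebasis3_zeta mulrAC.
Qed.

End CliffordZeta.

Section Contractions.
Variable R : realFieldType.
Implicit Types (X : vec R).

Lemma contr3_pairing X (g : 'I_7 -> 'I_7 -> 'I_7 -> R) (C : 'I_7 -> 'I_7 -> R) :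
  \sum_i \sum_j contr3 X g i j * C i j = \sum_p X p * \sum_i \sum_j g p i j * C i j.
Proof. by rewrite /contr3 pair_big sum_pairing; apply: eq_bigr => p _; rewrite pair_big. Qed.

Lemma contr4_pairing X (g : 'I_7 -> 'I_7 -> 'I_7 -> 'I_7 -> R) (C : 'I_7 -> 'I_7 -> 'I_7 -> R) :
  \sum_i \sum_j \sum_k contr4 X g i j k * C i j k =
  \sum_p X p * \sum_i \sum_j \sum_k g p i j k * C i j k.
Proof. by rewrite /contr4 sum3_pair sum_pairing; apply: eq_bigr => p _; rewrite sum3_pair. Qed.

Lemma hodge3_pairing (g : 'I_7 -> 'I_7 -> 'I_7 -> R) (p : 'I_7) (C : 'I_7 -> 'I_7 -> 'I_7 -> R) :
  \sum_i \sum_j \sum_k hodge3 g p i j k * C i j k =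
  (\sum_a \sum_b \sum_c g a b c * \sum_i \sum_j \sum_k eps7 R a b c p i j k * C i j k) / 6%:R.
Proof.
rewrite /hodge3 sum3_pair; under eq_bigr do rewrite mulrAC sum3_pair.
rewrite -mulr_suml sum_pairing sum3_pair; congr (_ / _).
by apply: eq_bigr => x _; rewrite sum3_pair.
Qed.

End Contractions.

Section SpinorIdentities.
Variable R : realFieldType.
Implicit Types (X : vec R) (h : 'I_7 -> 'I_7 -> R).

Lemma cliff2_contr3_phi X :
  cliff2 (contr3 X (phi R)) (zeta R) = sp_scale 3%:R (cliff X (zeta R)).
Proof.
rewrite cliff2_zeta cliff_zeta; apply: spinor_ext => [|l] /=.
  rewrite big1 ?oppr0 ?mul0r ?mulr0 // => i _.
  by rewrite /contr3 big1 // => p _; rewrite phi_diag mulr0.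
rewrite contr3_pairing; under eq_bigr => p _ do rewrite phi_contract mulrCA.
by rewrite -mulr_sumr sum_deltar; field.
Qed.

Lemma cliff2_contr3_gamma h X : symmetric2 h -> traceless2 h ->
  cliff2 (contr3 X (gamma_of h)) (zeta R) = sp_scale 2%:R (cliff (happ h X) (zeta R)).
Proof.
move=> h_sym h_tr; rewrite cliff2_zeta cliff_zeta; apply: spinor_ext => [|l] /=.
  rewrite big1 ?oppr0 ?mul0r ?mulr0 // => i _.
  by rewrite /contr3 big1 // => p _; rewrite gamma_diag mulr0.
rewrite contr3_pairing /happ mulr_sumr mulr_suml; apply: eq_bigr => p _.
by rewrite gamma_phi_contract //; field.
Qed.

Lemma cliff3_contr4_hodge_gamma h X : symmetric2 h -> traceless2 h ->
  cliff3 (contr4 X (hodge3 (gamma_of h))) (zeta R)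
  = sp_scale (- 2%:R) (cliff (happ h X) (zeta R)).
Proof.
move=> h_sym h_tr; rewrite cliff3_zeta cliff_zeta; apply: spinor_ext => [|l] /=.
  rewrite contr4_pairing big1 ?oppr0 ?mul0r ?mulr0 // => p _.
  by rewrite hodge3_pairing hodge_gamma_phi // mul0r mulr0.
rewrite contr4_pairing /happ mulr_sumr mulr_suml; apply: eq_bigr => p _.
by rewrite hodge3_pairing hodge_gamma_cliff //; field.
Qed.

End SpinorIdentities.

Theorem lemma5p4 (R : realFieldType) :
  (forall X : vec R,
     cliff2 (contr3 X (@phi R)) (zeta R) = sp_scale 3%:R (cliff X (zeta R))) /\
  (forall (h : 'I_7 -> 'I_7 -> R), symmetric2 h -> traceless2 h ->
     forall X : vec R,
       cliff2 (contr3 X (gamma_of h)) (zeta R)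
         = sp_scale 2%:R (cliff (happ h X) (zeta R)) /\
       cliff3 (contr4 X (hodge3 (gamma_of h))) (zeta R)
         = sp_scale (- 2%:R) (cliff (happ h X) (zeta R))).
Proof.
split=> [X | h h_sym h_tr X]; first exact: cliff2_contr3_phi.
by split; [exact: cliff2_contr3_gamma | exact: cliff3_contr4_hodge_gamma].
Qed.
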